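(* Let $L$ be an interval locale and $f:E\to F$ a morphism of sheaves of monomorphisms on $L_{+}$. If $f$ is a stalkwise epimorphism (respectively stalkwise monomorphism, stalkwise isomorphism), then $f$ is an epimorphism (respectively monomorphism, isomorphism) of sheaves on $L_{+}$.
   Context: A locale $L$ is a complete lattice in which finite meets distribute over arbitrary joins, with Grothendieck topology: $\{b_j\le a\}$ covers $a$ iff $\bigvee_j b_j=a$. $L$ is an interval if it is totally ordered and densely ordered. $1$ is the top element and $i$ the bottom element of $L$; $L_{+}=L\sqcup\{0\}$ with a new bottom $0<i$. A sheaf of monomorphisms on $L_{+}$ is a sheaf $F$ with $F(b)\to F(a)$ injective for all $a\le b$ in $L$. For a sheaf $F$ on $L_{+}$ and $x\in L_{+}\setminus\{1\}$, the stalk is $F_x=\varinjlim_{s\in L_{+},\,x<s}F(s)$ (so $F_0\cong F(i)$). A map $E\to F$ is a stalkwise epimorphism (monomorphism, isomorphism) if $E_x\to F_x$ is surjective (injective, bijective) for all $x\in L_{+}\setminus\{1\}$. *)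

Set Implicit Arguments.
Unset Strict Implicit.

Record Locale := {
  lcar :> Type;
  le : lcar -> lcar -> Prop;
  le_refl : forall a, le a a;
  le_trans : forall a b c, le a b -> le b c -> le a c;
  le_antisym : forall a b, le a b -> le b a -> a = b;
  join : (lcar -> Prop) -> lcar;
  join_ub : forall (S : lcar -> Prop) a, S a -> le a (join S);
  join_least : forall (S : lcar -> Prop) b, (forall a, S a -> le a b) -> le (join S) b;
  meet : lcar -> lcar -> lcar;
  meet_lb1 : forall a b, le (meet a b) a;
  meet_lb2 : forall a b, le (meet a b) b;
  meet_greatest : forall a b c, le c a -> le c b -> le c (meet a b);
  meet_join_distr : forall a (S : lcar -> Prop),
      meet a (join S) = join (fun c => exists b, S b /\ c = meet a b)
}.
Arguments le {L} a b : rename.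
Arguments join {L} S : rename.
Arguments meet {L} a b : rename.

Definition lt {L : Locale} (a b : L) : Prop := le a b /\ a <> b.

Definition ltop (L : Locale) : L := join (fun _ => True).
Definition lbot (L : Locale) : L := join (fun _ => False).

Definition is_interval (L : Locale) : Prop :=
  (forall a b : L, le a b \/ le b a) /\
  (forall a b : L, lt a b -> exists c : L, lt a c /\ lt c b).

(** * L_+ = L with a new bottom 0 (represented by None) *)
Definition Lplus (L : Locale) : Type := option L.

Definition lep {L : Locale} (a b : Lplus L) : Prop :=
  match a, b with
  | None, _ => True
  | Some _, None => False
  | Some a', Some b' => le a' b'
  end.

Definition ltp {L : Locale} (a b : Lplus L) : Prop := lep a b /\ a <> b.

Record Presheaf (L : Locale) := {
  sec :> Lplus L -> Type;
  res : forall a b : Lplus L, lep a b -> sec b -> sec a;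
  res_id : forall a (h : lep a a) x, res h x = x;
  res_comp : forall a b c (hab : lep a b) (hbc : lep b c) (hac : lep a c) x,
      res hab (res hbc x) = res hac x
}.
Arguments res {L} p {a b} _ _ : rename.

(** Sheaf condition for the Grothendieck topology of the locale L_+:
    a family (b_j <= a)_j covers a iff a is the join (least upper bound)
    of the b_j in L_+.  Matching families are stated sieve-wise: the
    sections agree after restriction to every common lower bound. *)
Definition is_sheaf {L : Locale} (P : Presheaf L) : Prop :=
  forall (a : Lplus L) (J : Type) (b : J -> Lplus L) (hb : forall j, lep (b j) a),
    (forall u : Lplus L, (forall j, lep (b j) u) -> lep a u) ->
    forall s : forall j, P (b j),
      (forall j k (c : Lplus L) (hj : lep c (b j)) (hk : lep c (b k)),
          res P hj (s j) = res P hk (s k)) ->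
      exists t : P a,
        (forall j, res P (hb j) t = s j) /\
        (forall t' : P a, (forall j, res P (hb j) t' = s j) -> t' = t).

Record Sheaf (L : Locale) := {
  sh :> Presheaf L;
  sh_cond : is_sheaf sh
}.

Definition sheaf_of_monos {L : Locale} (F : Sheaf L) : Prop :=
  forall (a b : L) (h : lep (Some a) (Some b)) (x y : F (Some b)),
    res F h x = res F h y -> x = y.

Unset Implicit Arguments.
Record Hom {L : Locale} (E F : Presheaf L) := {
  hcomp :> forall a : Lplus L, E a -> F a;
  hnat : forall a b (h : lep a b) (x : E b),
      hcomp a (@res L E a b h x) = @res L F a b h (hcomp b x)
}.

Set Implicit Arguments.
Arguments hcomp {L E F} _ _ _.

Definition hom_eq {L : Locale} {E F : Presheaf L} (g h : Hom E F) : Prop :=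
  forall a x, g a x = h a x.

Definition is_epi {L : Locale} {E F : Sheaf L} (f : Hom E F) : Prop :=
  forall (G : Sheaf L) (g h : Hom F G),
    (forall a x, g a (f a x) = h a (f a x)) -> hom_eq g h.

Definition is_mono {L : Locale} {E F : Sheaf L} (f : Hom E F) : Prop :=
  forall (G : Sheaf L) (g h : Hom G E),
    (forall a x, f a (g a x) = f a (h a x)) -> hom_eq g h.

Definition is_iso {L : Locale} {E F : Sheaf L} (f : Hom E F) : Prop :=
  exists g : Hom F E,
    (forall a x, g a (f a x) = x) /\ (forall a y, f a (g a y) = y).

(** * Stalks F_x = colim_{x < s} F(s), as germs modulo the filtered-colimit
    equivalence (two representatives are identified iff they agree after
    restriction to some t with x < t below both). *)
Definition germ {L : Locale} (P : Presheaf L) (x : Lplus L) : Type :=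
  { s : Lplus L & (ltp x s * P s)%type }.

Definition germ_eq {L : Locale} (P : Presheaf L) (x : Lplus L) (g1 g2 : germ P x) : Prop :=
  match g1, g2 with
  | existT _ s1 (_, v1), existT _ s2 (_, v2) =>
      exists (t : Lplus L) (ht : ltp x t) (h1 : lep t s1) (h2 : lep t s2),
        res P h1 v1 = res P h2 v2
  end.

Definition germ_map {L : Locale} {E F : Presheaf L} (f : Hom E F) (x : Lplus L)
  (g : germ E x) : germ F x :=
  match g with
  | existT _ s (hs, v) => existT _ s (hs, f s v)
  end.

Definition stalkwise_epi {L : Locale} {E F : Presheaf L} (f : Hom E F) : Prop :=
  forall x : Lplus L, x <> Some (ltop L) ->
    forall g : germ F x, exists g' : germ E x, germ_eq (germ_map f g') g.

Definition stalkwise_mono {L : Locale} {E F : Presheaf L} (f : Hom E F) : Prop :=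
  forall x : Lplus L, x <> Some (ltop L) ->
    forall g1 g2 : germ E x,
      germ_eq (germ_map f g1) (germ_map f g2) -> germ_eq g1 g2.

Definition stalkwise_iso {L : Locale} {E F : Presheaf L} (f : Hom E F) : Prop :=
  stalkwise_epi f /\ stalkwise_mono f.

From Stdlib Require Import ClassicalEpsilon.

(** The whole argument rests on one geometric fact about an interval L:
    since L_+ is totally ordered, a family (b_j <= a) covers a as soon as
    every x strictly below a lies strictly below some b_j.  Combined with
    the sheaf condition this gives a "germ criterion": two sections over a
    are equal as soon as, for every x < a, they agree on some c with
    x < c <= a, i.e. as soon as their germs at every point x < a agree.

    - A stalkwise mono has injective components: equal images give equal
      germs of the sections, so the sections agree by the germ criterion.
    - A stalkwise epi has sections that lift locally around every x < a;
      the germ criterion in the target sheaf G then shows that f is epi.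
    - If f is also stalkwise mono the local lifts are compatible (by
      injectivity), glue in E, and the glued section maps to the given one.
    Componentwise bijectivity then yields an inverse morphism by choice. *)

Section OrderLplus.
Context {L : Locale}.

Lemma lep_refl (a : Lplus L) : lep a a.
Proof. destruct a; simpl; auto using le_refl. Qed.

Lemma lep_trans {a b c : Lplus L} : lep a b -> lep b c -> lep a c.
Proof. destruct a, b, c; simpl; try tauto. apply le_trans. Qed.

Lemma lep_antisym (a b : Lplus L) : lep a b -> lep b a -> a = b.
Proof. destruct a, b; simpl; try tauto. intros; f_equal; apply le_antisym; auto. Qed.

Lemma lep_total (HL : is_interval L) (a b : Lplus L) : lep a b \/ lep b a.
Proof. destruct a, b; simpl; auto. apply (proj1 HL). Qed.

(** Points strictly below some element are not the top 1 of L, so stalks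
    exist there. *)
Lemma ltp_not_top {a x : Lplus L} : ltp x a -> x <> Some (ltop L).
Proof.
  intros [h ne] ->. destruct a as [a|]; simpl in h; [|exact h].
  apply ne; f_equal. apply le_antisym; auto. apply join_ub. exact I.
Qed.

Lemma cover_of_germs (HL : is_interval L) (a : Lplus L) (J : Type) (b : J -> Lplus L) :
  (forall x, ltp x a -> exists j, ltp x (b j)) ->
  forall u, (forall j, lep (b j) u) -> lep a u.
Proof.
  intros Hb u Hu.
  destruct (lep_total HL a u) as [Hau | Hua]; [exact Hau|].
  destruct (classic (u = a)) as [-> | Hne]; [apply lep_refl|].
  destruct (Hb u (conj Hua Hne)) as [j [Huj Hne']].
  exfalso; apply Hne'. apply lep_antisym; auto.
Qed.

End OrderLplus.

Section Restriction.
Context {L : Locale} (P : Presheaf L).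

Lemma res_pi {a b} (h1 h2 : lep a b) x : res P h1 x = res P h2 x.
Proof. rewrite <- (res_id (lep_refl b) x) at 1. apply res_comp. Qed.

Lemma res_match a (y : P a) c b1 b2 (h1 : lep b1 a) (h2 : lep b2 a)
  (k1 : lep c b1) (k2 : lep c b2) : res P k1 (res P h1 y) = res P k2 (res P h2 y).
Proof.
  rewrite (res_comp k1 h1 (lep_trans k1 h1) y), (res_comp k2 h2 (lep_trans k1 h1) y).
  reflexivity.
Qed.

End Restriction.

Section GermCriterion.
Context {L : Locale} (HL : is_interval L) {G : Sheaf L}.

Lemma sheaf_local_eq a (J : Type) (b : J -> Lplus L) (hb : forall j, lep (b j) a) :
  (forall u, (forall j, lep (b j) u) -> lep a u) ->
  forall s t : G a, (forall j, res G (hb j) s = res G (hb j) t) -> s = t.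
Proof.
  intros Hcov s t Hst.
  destruct (@sh_cond L G a J b hb Hcov (fun j => res G (hb j) s)) as [u [_ Hu]].
  - intros j k c hj hk. apply res_match.
  - rewrite (Hu s (fun j => eq_refl)). symmetry. apply Hu. intro j. now rewrite Hst.
Qed.

Lemma sheaf_eq_of_germs a (s t : G a) :
  (forall x, ltp x a -> exists c (hc : lep c a), ltp x c /\ res G hc s = res G hc t) ->
  s = t.
Proof.
  intros Hgerm.
  set (J := {c : Lplus L & {hc : lep c a | res G hc s = res G hc t}}).
  apply (@sheaf_local_eq a J (fun j => projT1 j) (fun j => proj1_sig (projT2 j))).
  - apply cover_of_germs; [exact HL|]. intros x hx.
    destruct (Hgerm x hx) as [c [hc [hxc Heq]]].
    exists (existT _ c (exist _ hc Heq)). exact hxc.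
  - intros [c [hc Heq]]. exact Heq.
Qed.

End GermCriterion.

Section Stalkwise.
Context {L : Locale} (HL : is_interval L) {E F : Sheaf L} {f : Hom E F}.

Lemma inj_of_stalkwise_mono (Hm : stalkwise_mono f) {a} {e1 e2 : E a} :
  f a e1 = f a e2 -> e1 = e2.
Proof.
  intros Hf.
  apply (sheaf_eq_of_germs HL). intros x hx.
  destruct (Hm x (ltp_not_top hx) (existT _ a (hx, e1)) (existT _ a (hx, e2)))
    as [c [hxc [h1 [h2 Heq]]]].
  - exists a, hx, (lep_refl a), (lep_refl a). simpl. now rewrite Hf.
  - exists c, h1. split; [exact hxc|]. rewrite Heq. apply res_pi.
Qed.

Lemma local_lift (He : stalkwise_epi f) {a} (y : F a) {x} (hx : ltp x a) :
  exists c (hc : lep c a) (e : E c), ltp x c /\ f c e = res F hc y.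
Proof.
  destruct (He x (ltp_not_top hx) (existT _ a (hx, y))) as [[s [hs e]] Hg].
  destruct Hg as [c [hxc [h1 [h2 Heq]]]].
  exists c, h2, (res E h1 e). split; [exact hxc|]. now rewrite hnat.
Qed.

Lemma surj_of_stalkwise_iso : stalkwise_epi f -> stalkwise_mono f ->
  forall a (y : F a), exists e, f a e = y.
Proof.
  intros He Hm a y.
  set (J := {c : Lplus L & {hc : lep c a & {e : E c | f c e = res F hc y}}}).
  set (b := fun j : J => projT1 j).
  set (hb := fun j : J => projT1 (projT2 j)).
  set (lift := fun j : J => proj1_sig (projT2 (projT2 j))).
  assert (Hlift : forall j, f (b j) (lift j) = res F (hb j) y)
    by (intro j; exact (proj2_sig (projT2 (projT2 j)))).
  assert (Hcov : forall u, (forall j, lep (b j) u) -> lep a u).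
  { apply cover_of_germs; [exact HL|]. intros x hx.
    destruct (local_lift He y hx) as [c [hc [e [hxc Hfe]]]].
    exists (existT _ c (existT _ hc (exist _ e Hfe))). exact hxc. }
  destruct (@sh_cond L E a J b hb Hcov lift) as [t [Ht _]].
  - intros j k c hj hk. apply (inj_of_stalkwise_mono Hm).
    rewrite !hnat, !Hlift.
    apply res_match.
  - exists t. apply (sheaf_eq_of_germs HL). intros x hx.
    destruct (local_lift He y hx) as [c [hc [e [hxc Hfe]]]].
    exists c, hc. split; [exact hxc|].
    rewrite <- hnat, <- Hfe.
    exact (f_equal (f c) (Ht (existT _ c (existT _ hc (exist _ e Hfe))))).
Qed.

End Stalkwise.

Lemma iso_of_bijective (L : Locale) (E F : Sheaf L) (f : Hom E F) :
  (forall a (e1 e2 : E a), f a e1 = f a e2 -> e1 = e2) ->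
  (forall a (y : F a), exists e, f a e = y) -> is_iso f.
Proof.
  intros Hinj Hsurj.
  set (g := fun a y => proj1_sig (constructive_indefinite_description _ (Hsurj a y))).
  assert (Hg : forall a y, f a (g a y) = y) by (intros; apply proj2_sig).
  unshelve eexists {| hcomp := g |}.
  - intros a b h y. apply Hinj. now rewrite hnat, !Hg.
  - split; [|exact Hg]. intros a e. apply Hinj. apply Hg.
Qed.

Theorem lemma32 (L : Locale) (HL : is_interval L) (E F : Sheaf L)
  (HE : sheaf_of_monos E) (HF : sheaf_of_monos F) (f : Hom E F) :
  (stalkwise_epi f -> is_epi f) /\
  (stalkwise_mono f -> is_mono f) /\
  (stalkwise_iso f -> is_iso f).
Proof.
  split; [|split].
  - (* g and h agree on the local lifts, hence near every point *)
    intros Hep G g h Hgh a y. apply (sheaf_eq_of_germs HL). intros x hx.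
    destruct (local_lift Hep y hx) as [c [hc [e [hxc Hfe]]]].
    exists c, hc. split; [exact hxc|].
    rewrite <- !hnat, <- Hfe. apply Hgh.
  - intros Hm G g h Hgh a x. exact (inj_of_stalkwise_mono HL Hm (Hgh a x)).
  - intros [Hep Hm]. apply iso_of_bijective.
    + intros a e1 e2. exact (inj_of_stalkwise_mono HL Hm).
    + exact (surj_of_stalkwise_iso HL Hep Hm).
Qed.
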